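(* Let $\mathbf G$ be a strict quasi-covering of $\mathbf H$ of radius $r$ via $\gamma$ (with associated covering $\mathbf K$ via $\delta$ and centres $z\in V(G)$, $z_0\in V(K)$). For every $q\in\mathbb N$, if $r\ge q\,|V(H)|$ then the quasi-covering has at least $q$ sheets.
   Context: Graphs are simple, undirected, connected, labelled; $\mathbf H$ is finite. $B_G(v,r)$ is the ball of radius $r$, $B_G(v)=B_G(v,1)$. $\mathbf K$ is a covering of $\mathbf H$ via $\delta$ if $\delta$ is a surjective label-preserving homomorphism whose restriction to each $B_K(v)$ is a bijection onto $B_H(\delta(v))$. $\mathbf G$ is a quasi-covering of $\mathbf H$ of radius $r$ via a partial map $\gamma:V(G)\to V(H)$ if there exist a finite or infinite covering $\mathbf K$ of $\mathbf H$ via $\delta$ (the associated covering) and vertices $z_0\in V(K)$, $z\in V(G)$ (the centre) such that $B_{\mathbf G}(z,r)$ is isomorphic via some $\varphi$ to $B_{\mathbf K}(z_0,r)$, $\gamma$ is defined on $B_G(z,r)$, and $\gamma=\delta\circ\varphi$ on $V(B_G(z,r))$. It is strict if $B_{\mathbf G}(z,r-1)\neq\mathbf G$. Its number of sheets is $\min_{v\in V(H)}\left|\{w\in\delta^{-1}(v)\mid B_K(w,1)\subseteq B_K(z_0,r)\}\right|$. *)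

From mathcomp Require Import all_boot.
Set Implicit Arguments. Unset Strict Implicit. Unset Printing Implicit Defensive.

Definition simple_graph (V : Type) (adj : V -> V -> Prop) : Prop :=
  (forall x y, adj x y -> adj y x) /\ (forall x, ~ adj x x).

(* within adj x y n  <->  dist(x,y) <= n *)
Fixpoint within (V : Type) (adj : V -> V -> Prop) (x y : V) (n : nat) : Prop :=
  match n with
  | 0 => x = y
  | m.+1 => within adj x y m \/ exists u, within adj x u m /\ adj u y
  end.

Definition connected_graph (V : Type) (adj : V -> V -> Prop) : Prop :=
  forall x y, exists n, within adj x y n.

(* vertex set of the ball B(v,r) (the ball is the induced subgraph on it) *)
Definition ball (V : Type) (adj : V -> V -> Prop) (v : V) (r : nat) : V -> Prop :=
  fun w => within adj v w r.

Definition is_covering (L : Type) (VK : Type) (adjK : VK -> VK -> Prop) (labK : VK -> L)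
    (VH : Type) (adjH : VH -> VH -> Prop) (labH : VH -> L) (delta : VK -> VH) : Prop :=
  [/\ (forall v, exists w, delta w = v),
      (forall x y, adjK x y -> adjH (delta x) (delta y)),
      (forall x, labH (delta x) = labK x)
    & forall v : VK,
      ((forall w, ball adjK v 1 w -> ball adjH (delta v) 1 (delta w)) /\
       (forall w w', ball adjK v 1 w -> ball adjK v 1 w' -> delta w = delta w' -> w = w') /\
       (forall u, ball adjH (delta v) 1 u -> exists w, ball adjK v 1 w /\ delta w = u))].

Definition ball_iso (L : Type) (VG : Type) (adjG : VG -> VG -> Prop) (labG : VG -> L)
    (VK : Type) (adjK : VK -> VK -> Prop) (labK : VK -> L)
    (z : VG) (z0 : VK) (r : nat) (phi : VG -> VK) : Prop :=
  phi z = z0 /\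
  [/\ (forall x, ball adjG z r x -> ball adjK z0 r (phi x)),
      (forall x y, ball adjG z r x -> ball adjG z r y -> phi x = phi y -> x = y),
      (forall y, ball adjK z0 r y -> exists x, ball adjG z r x /\ phi x = y),
      (forall x y, ball adjG z r x -> ball adjG z r y -> (adjG x y <-> adjK (phi x) (phi y)))
    & (forall x, ball adjG z r x -> labK (phi x) = labG x)].

Definition is_quasi_covering (L : Type)
    (VG : Type) (adjG : VG -> VG -> Prop) (labG : VG -> L)
    (VH : Type) (adjH : VH -> VH -> Prop) (labH : VH -> L)
    (VK : Type) (adjK : VK -> VK -> Prop) (labK : VK -> L)
    (gamma : VG -> option VH) (delta : VK -> VH) (z : VG) (z0 : VK) (phi : VG -> VK)
    (r : nat) : Prop :=
  [/\ simple_graph adjK, connected_graph adjK,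
      @is_covering L VK adjK labK VH adjH labH delta,
      @ball_iso L VG adjG labG VK adjK labK z z0 r phi
    & forall x, ball adjG z r x -> gamma x = Some (delta (phi x))].

Definition qc_strict (VG : Type) (adjG : VG -> VG -> Prop) (z : VG) (r : nat) : Prop :=
  exists x, ~ ball adjG z (r - 1) x.

(* the number of sheets, min_{v in V(H)} |{w in delta^-1(v) | B_K(w,1) ⊆ B_K(z0,r)}|,
   is at least q *)
Definition at_least_sheets (VK : Type) (adjK : VK -> VK -> Prop) (VH : finType)
    (delta : VK -> VH) (z0 : VK) (r q : nat) : Prop :=
  forall v : VH, exists f : 'I_q -> VK,
    injective f /\
    forall i, delta (f i) = v /\ (forall u, ball adjK (f i) 1 u -> ball adjK z0 r u).

From mathcomp Require Import all_boot zify boolp.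
Set Implicit Arguments. Unset Strict Implicit. Unset Printing Implicit Defensive.

(* A breadth-first spanning tree of the finite connected graph H rooted at v
   gives a map par moving each vertex at most one step, with
   iter (|V(H)| - 1) par = v. Lifted through the covering, its iterate becomes
   a map rho from K to lifts of v that moves vertices by at most |V(H)| - 1
   and is injective on each fibre of delta. Strictness provides a geodesic
   y_0, ..., y_m from z in G with m = (q - 1) |V(H)| < r, which phi carries
   injectively into B_K(z0, m). By pigeonhole q of its points lie in one fibre
   of delta, and rho sends them to q distinct lifts of v whose unit balls stay
   within distance m + |V(H)| <= r of z0. *)

Section Within.
Variables (V : Type) (adj : V -> V -> Prop).

Lemma within_le x y k k' : within adj x y k -> k <= k' -> within adj x y k'.
Proof.
move=> xy; elim: k' => [|k' IH]; first by rewrite leqn0 => /eqP <-.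
by rewrite leq_eqVlt => /orP[/eqP <- // | /IH]; left.
Qed.

Lemma within_trans x y w a b :
  within adj x y a -> within adj y w b -> within adj x w (a + b).
Proof.
move=> xy; elim: b w => [|b IH] w /= yw; first by rewrite addn0 -yw.
rewrite addnS; case: yw => [yw | [u [yu uw]]]; first by left; apply: IH.
by right; exists u; split; first apply: IH.
Qed.

Lemma adj_within1 x y : adj x y -> within adj x y 1.
Proof. by move=> xy; right; exists x. Qed.

Lemma ball1_refl x : ball adj x 1 x.
Proof. by left. Qed.

Lemma ball1_sym x y : (forall u w, adj u w -> adj w u) ->
  ball adj x 1 y -> ball adj y 1 x.
Proof.
move=> adj_sym [<- | [u [/= <- xy]]]; first exact: ball1_refl.
exact/adj_within1/adj_sym.
Qed.

End Within.

Section Distance.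
Variables (V : Type) (adj : V -> V -> Prop) (v : V).
Hypothesis reach : forall y, exists k, within adj v y k.

Lemma exists_within_asbool y : exists k, `[< within adj v y k >].
Proof. by have [k yk] := reach y; exists k; apply/asboolP. Qed.

Definition dist (y : V) : nat := ex_minn (exists_within_asbool y).

Lemma dist_within y : within adj v y (dist y).
Proof. by rewrite /dist; case: ex_minnP => k /asboolP. Qed.

Lemma dist_min y k : within adj v y k -> dist y <= k.
Proof. by rewrite /dist; case: ex_minnP => m _ m_min /asboolP/m_min. Qed.

Lemma dist_eq0 y : dist y = 0 -> y = v.
Proof. by move=> y0; have := dist_within y; rewrite y0. Qed.

Hypothesis adj_sym : forall x y, adj x y -> adj y x.

Lemma exists_parent :
  exists par : V -> V, forall y, ball adj y 1 (par y) /\ dist (par y) = (dist y).-1.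
Proof.
suff /choice[par parP] : forall y, exists u, ball adj y 1 u /\ dist u = (dist y).-1.
  by exists par.
move=> y; have := dist_within y; case E: (dist y) => [|k] /=.
  by exists y; split; first exact: ball1_refl.
case=> [yk | [u [uk uy]]]; first by have := dist_min yk; rewrite E ltnn.
exists u; split; first exact/adj_within1/adj_sym.
apply/eqP; rewrite eqn_leq dist_min //=.
have : within adj v y (dist u).+1 by right; exists u; split; first exact: dist_within.
by move/dist_min; rewrite E.
Qed.

Section Parent.
Variable par : V -> V.
Hypothesis par_dist : forall y, dist (par y) = (dist y).-1.

Lemma dist_iter_parent j y : dist (iter j par y) = dist y - j.
Proof. by elim: j => [|j IH]; rewrite ?subn0 // iterS par_dist IH subnS. Qed.

End Parent.

Lemma geodesic_points m x : m <= dist x ->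
  exists Y : 'I_m.+1 -> V, injective Y /\ forall t, dist (Y t) = t.
Proof.
have [par parP] := exists_parent.
have par_dist y : dist (par y) = (dist y).-1 by have [] := parP y.
move=> mx; exists (fun t => iter (dist x - t) par x).
have distY (t : 'I_m.+1) : dist (iter (dist x - t) par x) = t.
  by rewrite dist_iter_parent // subKn // (leq_trans _ mx) // -ltnS.
by split=> // s t /(congr1 dist); rewrite !distY => /val_inj.
Qed.

End Distance.

Lemma dist_lt_card (V : finType) (adj : V -> V -> Prop) v
    (adj_sym : forall x y, adj x y -> adj y x)
    (reach : forall y, exists k, within adj v y k) y :
  dist reach y < #|V|.
Proof.
have [Y [Y_inj _]] := geodesic_points adj_sym (leqnn (dist reach y)).
by have := leq_card Y Y_inj; rewrite card_ord.
Qed.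

Lemma exists_retraction (V : finType) (adj : V -> V -> Prop) v :
  simple_graph adj -> connected_graph adj ->
  exists par : V -> V, forall y, ball adj y 1 (par y) /\ iter #|V|.-1 par y = v.
Proof.
move=> [adj_sym _] conn; have reach y := conn v y.
have [par parP] := exists_parent reach adj_sym.
exists par => y; split; first by have [] := parP y.
apply: (dist_eq0 (reach := reach)); rewrite (dist_iter_parent (fun y => (parP y).2)).
by have := dist_lt_card adj_sym reach y; lia.
Qed.

Section CoveringLift.
Variables (L VK VH : Type) (adjK : VK -> VK -> Prop) (labK : VK -> L).
Variables (adjH : VH -> VH -> Prop) (labH : VH -> L) (delta : VK -> VH).

(* Injectivity on the fibres of [delta] is what makes distinct points of one
   fibre retract to distinct lifts of the root. *)
Definition lifts (F : VK -> VK) (f : VH -> VH) (k : nat) : Prop :=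
  forall u, [/\ delta (F u) = f (delta u), within adjK u (F u) k &
    forall u', delta u' = delta u -> F u' = F u -> u' = u].

Lemma lifts_iter F f k j : lifts F f k -> lifts (iter j F) (iter j f) (j * k).
Proof.
move=> Ff; elim: j => [|j IH] u; first by split=> // u' _.
have [dF uF F_inj] := IH u; have [dFF FF FF_inj] := Ff (iter j F u).
rewrite !iterS mulSn addnC; split; first by rewrite dFF dF.
  exact: within_trans uF FF.
move=> u' du'; have [dF' _ _] := IH u'.
by move/FF_inj; rewrite dF' dF du' => /(_ erefl); apply: F_inj.
Qed.

Hypothesis adjK_sym : forall x y, adjK x y -> adjK y x.
Hypothesis cov : is_covering adjK labK adjH labH delta.

Lemma covering_lifts f : (forall y, ball adjH y 1 (f y)) ->
  exists F, lifts F f 1.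
Proof.
have [_ _ _ loc] := cov; move=> f_ball.
suff /choice[F FP] : forall u, exists w, ball adjK u 1 w /\ delta w = f (delta u).
  exists F => u; have [uF dF] := FP u; split=> // u' du' FuF.
  have [_ [inj _]] := loc (F u); apply: inj => //; apply: ball1_sym => //.
  by rewrite -FuF; exact: (FP u').1.
by move=> u; have [_ [_ surj]] := loc u; apply: surj.
Qed.

End CoveringLift.

Section BallIso.
Variables (L VG VK : Type) (adjG : VG -> VG -> Prop) (labG : VG -> L).
Variables (adjK : VK -> VK -> Prop) (labK : VK -> L).
Variables (z : VG) (z0 : VK) (r : nat) (phi : VG -> VK).
Hypothesis iso : ball_iso adjG labG adjK labK z z0 r phi.

Lemma ball_iso_within t y : t <= r -> within adjG z y t -> within adjK z0 (phi y) t.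
Proof.
have [phi_z [_ _ _ phi_adj _]] := iso.
elim: t y => [|t IH] y t_r /=; first by move=> <-.
case=> [zy | [u [zu uy]]]; first by left; apply: IH zy; lia.
right; exists (phi u); split; first by apply: IH zu; lia.
apply/phi_adj => //; first by apply: within_le zu _; lia.
by apply: within_le t_r; right; exists u.
Qed.

Lemma strict_ball_points m :
  (forall x y, adjG x y -> adjG y x) -> connected_graph adjG ->
  qc_strict adjG z r -> m < r ->
  exists P : 'I_m.+1 -> VK, injective P /\ forall t, within adjK z0 (P t) t.
Proof.
move=> adj_sym conn [x zx] m_r; have reach y := conn z y.
have m_x : m <= dist reach x.
  rewrite leqNgt; apply/negP => x_m.
  by apply/zx/(within_le (dist_within reach x)); lia.
have [Y [Y_inj distY]] := geodesic_points adj_sym m_x.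
have zY t : within adjG z (Y t) t by have := dist_within reach (Y t); rewrite distY.
have [_ [_ phi_inj _ _ _]] := iso.
have t_r (t : 'I_m.+1) : t <= r by have := ltn_ord t; lia.
exists (phi \o Y); split=> [s t /phi_inj sYt | t]; last exact: ball_iso_within (zY t).
by apply/Y_inj/sYt; apply: within_le (zY _) _.
Qed.

End BallIso.

Lemma pigeonhole_fiber (I J : finType) (h : I -> J) q :
  #|J| * q < #|I| -> exists j, q < #|[set i | h i == j]|.
Proof.
move=> ltJI.
have [/existsP // | /existsPn small_fibers] :=
  boolP [exists j, q < #|[set i | h i == j]|].
suff : #|I| <= #|J| * q by rewrite leqNgt ltJI.
rewrite -sum1_card (partition_big h xpredT) //= -sum_nat_const.
by apply: leq_sum => j _; rewrite sum1_card -cardsE leqNgt small_fibers.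
Qed.

Lemma sheets_from_points (VK : Type) (adjK : VK -> VK -> Prop) (VH : finType)
    (delta : VK -> VH) (z0 : VK) (v : VH) (rho : VK -> VK) (g : VH -> VH)
    (k m r q : nat) (P : 'I_m.+1 -> VK) :
  lifts adjK delta rho g k -> (forall y, g y = v) ->
  injective P -> (forall t, within adjK z0 (P t) t) ->
  #|VH| * q < m.+1 -> m + k < r ->
  exists f : 'I_q.+1 -> VK, injective f /\ forall i,
    delta (f i) = v /\ (forall u, ball adjK (f i) 1 u -> ball adjK z0 r u).
Proof.
move=> rho_lifts g_v P_inj z0P card_m mk_r.
have [y0 big_fiber] : exists y0, q < #|[set t | delta (P t) == y0]|.
  by apply: pigeonhole_fiber; rewrite card_ord.
pose pick (i : 'I_q.+1) := enum_val (widen_ord big_fiber i).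
have d_pick i : delta (P (pick i)) = y0.
  by have := enum_valP (widen_ord big_fiber i); rewrite inE => /eqP.
exists (rho \o P \o pick); split=> [i j /= rho_ij | i].
  have [_ _ rho_inj] := rho_lifts (P (pick j)).
  have P_ij := rho_inj _ (etrans (d_pick i) (esym (d_pick j))) rho_ij.
  exact/val_inj/(congr1 val (enum_val_inj (P_inj _ _ P_ij))).
have [d_rho rho_within _] := rho_lifts (P (pick i)).
split=> [|u iu]; first by rewrite /= d_rho g_v.
apply: within_le (within_trans (within_trans (z0P _) rho_within) iu) _.
by have := ltn_ord (pick i); lia.
Qed.

Theorem mainTheorem13 (L : Type)
    (VG : Type) (adjG : VG -> VG -> Prop) (labG : VG -> L)
    (VH : finType) (adjH : VH -> VH -> Prop) (labH : VH -> L)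
    (VK : Type) (adjK : VK -> VK -> Prop) (labK : VK -> L)
    (gamma : VG -> option VH) (delta : VK -> VH) (z : VG) (z0 : VK) (phi : VG -> VK)
    (r q : nat) :
  simple_graph adjG -> connected_graph adjG ->
  simple_graph adjH -> connected_graph adjH ->
  @is_quasi_covering L VG adjG labG VH adjH labH VK adjK labK gamma delta z z0 phi r ->
  @qc_strict VG adjG z r ->
  q * #|VH| <= r ->
  @at_least_sheets VK adjK VH delta z0 r q.
Proof.
move=> [adjG_sym _] connG simpleH connH [[adjK_sym _] _ cov iso _] strict qn_r v.
case: q qn_r => [|q] qn_r; first by exists (fun=> z0); split=> -[].
have n_gt0 : 0 < #|VH| by apply/card_gt0P; exists v.
have [par par_retract] := exists_retraction v simpleH connH.
have [Par Par_lifts] := covering_lifts adjK_sym cov (fun y => (par_retract y).1).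
have m_r : q * #|VH| < r by rewrite mulSn in qn_r; lia.
have [P [P_inj z0P]] := strict_ball_points iso adjG_sym connG strict m_r.
apply: (sheets_from_points (lifts_iter #|VH|.-1 Par_lifts) _ P_inj z0P).
- by move=> y; rewrite (par_retract y).2.
- by rewrite mulnC.
- rewrite mulSn in qn_r; lia.
Qed.
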